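(* Let $\kappa$ be an uncountable regular cardinal, let $\mathcal{I}$ be a $\kappa$-complete proper ideal on $\kappa$ containing every bounded subset of $\kappa$, and let $\nu\in\{2,\kappa\}$. Let $\varphi\colon\mathrm{Fn}_{\mathcal{I}}({}^{\kappa}\nu)\to\mathrm{Fn}_{\mathcal{I}}({}^{\kappa}\nu)$ be continuous. Then $\varphi^*\colon{}^{\kappa}\nu\to{}^{\kappa}\nu$ is continuous with respect to $\tau_{\mathcal{I}}$ on both sides.
   Context: ${}^{\kappa}\nu$ is the set of functions $\kappa\to\nu$, $\mathrm{Fn}_{\mathcal{I}}({}^{\kappa}\nu)$ the set of functions $f\colon D\to\nu$ with $D\in\mathcal{I}$, $\mathbf{N}_f=\{x:f\subseteq x\}$, and $\tau_{\mathcal{I}}$ the topology on ${}^{\kappa}\nu$ generated by the sets $\mathbf{N}_f$. A map $\varphi\colon\mathrm{Fn}_{\mathcal{I}}\to\mathrm{Fn}_{\mathcal{I}}$ is monotone if $f\subseteq g$ implies $\varphi(f)\subseteq\varphi(g)$; it is continuous if it is monotone and for all $x\in{}^{\kappa}\nu$ and $D\in\mathcal{I}$ there is $E\in\mathcal{I}$ with $D\subseteq\mathrm{dom}(\varphi(x\restriction E))$. For continuous $\varphi$, $\varphi^*(x)=\lim_{D\in\mathcal{I}}\varphi(x\restriction D)$, the limit of the net indexed by the directed set $(\mathcal{I},\subseteq)$ in $({}^{\kappa}\nu,\tau_{\mathcal{I}})$ (identifying $\varphi(x\restriction D)$ with any point of ${}^{\kappa}\nu$ extending it is unnecessary: explicitly,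 $\varphi^*(x)$ is the unique $z\in{}^{\kappa}\nu$ such that for every $D\in\mathcal{I}$ there is $E\in\mathcal{I}$ with $z\restriction D=\varphi(x\restriction E')\restriction D$ for all $E'\in\mathcal{I}$ with $E\subseteq E'$). *)

From Stdlib Require Import ClassicalEpsilon ClassicalDescription.

Definition injective {A B : Type} (f : A -> B) : Prop :=
  forall x y, f x = f y -> x = y.
Definition card_le (A B : Type) : Prop := exists f : A -> B, injective f.
Definition card_lt (A B : Type) : Prop := card_le A B /\ ~ card_le B A.

Definition subset {K : Type} (A B : K -> Prop) : Prop := forall a, A a -> B a.

(** * The cardinal kappa, as a type K of ordinals with its well-order lt *)
Definition strict_well_order {K : Type} (lt : K -> K -> Prop) : Prop :=
  well_founded lt /\
  (forall a b c, lt a b -> lt b c -> lt a c) /\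
  (forall a b, lt a b \/ a = b \/ lt b a).

Definition is_cardinal {K : Type} (lt : K -> K -> Prop) : Prop :=
  strict_well_order lt /\ forall a : K, card_lt {b : K | lt b a} K.

Definition uncountable (K : Type) : Prop := ~ card_le K nat.

Definition bounded {K : Type} (lt : K -> K -> Prop) (S : K -> Prop) : Prop :=
  exists a, forall b, S b -> lt b a.

Definition regular {K : Type} (lt : K -> K -> Prop) : Prop :=
  forall S : K -> Prop, card_lt {b : K | S b} K -> bounded lt S.

Definition uncountable_regular_cardinal {K : Type} (lt : K -> K -> Prop) : Prop :=
  is_cardinal lt /\ uncountable K /\ regular lt.

Definition kappa_complete_proper_ideal {K : Type} (lt : K -> K -> Prop)
    (I : (K -> Prop) -> Prop) : Prop :=
  (forall A B, I B -> subset A B -> I A) /\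
  (forall (J : Type) (A : J -> K -> Prop),
      card_lt J K -> (forall j, I (A j)) -> I (fun a => exists j, A j a)) /\
  ~ I (fun _ => True).

Definition contains_bounded {K : Type} (lt : K -> K -> Prop)
    (I : (K -> Prop) -> Prop) : Prop :=
  forall S, bounded lt S -> I S.

Definition pfun (K V : Type) := K -> option V.

Definition dom {K V : Type} (f : pfun K V) : K -> Prop := fun a => f a <> None.

Definition Fn {K V : Type} (I : (K -> Prop) -> Prop) (f : pfun K V) : Prop :=
  I (dom f).

Definition psub {K V : Type} (f g : pfun K V) : Prop :=
  forall a v, f a = Some v -> g a = Some v.

Definition N {K V : Type} (f : pfun K V) : (K -> V) -> Prop :=
  fun x => forall a v, f a = Some v -> x a = v.

Definition restrict {K V : Type} (x : K -> V) (E : K -> Prop) : pfun K V :=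
  fun a => if excluded_middle_informative (E a) then Some (x a) else None.

Inductive tau_open {K V : Type} (I : (K -> Prop) -> Prop) : ((K -> V) -> Prop) -> Prop :=
| open_basic (f : pfun K V) : Fn I f -> tau_open I (N f)
| open_full : tau_open I (fun _ => True)
| open_inter (U W : (K -> V) -> Prop) :
    tau_open I U -> tau_open I W -> tau_open I (fun x => U x /\ W x)
| open_union (F : ((K -> V) -> Prop) -> Prop) :
    (forall U, F U -> tau_open I U) -> tau_open I (fun x => exists U, F U /\ U x).

Definition tau_continuous {K V : Type} (I : (K -> Prop) -> Prop)
    (G : (K -> V) -> (K -> V)) : Prop :=
  forall U, tau_open I U -> tau_open I (fun x => U (G x)).

Definition maps_Fn {K V : Type} (I : (K -> Prop) -> Prop)
    (phi : pfun K V -> pfun K V) : Prop :=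
  forall f, Fn I f -> Fn I (phi f).

Definition monotone {K V : Type} (I : (K -> Prop) -> Prop)
    (phi : pfun K V -> pfun K V) : Prop :=
  forall f g, Fn I f -> Fn I g -> psub f g -> psub (phi f) (phi g).

Definition phi_continuous {K V : Type} (I : (K -> Prop) -> Prop)
    (phi : pfun K V -> pfun K V) : Prop :=
  monotone I phi /\
  forall (x : K -> V) (D : K -> Prop), I D ->
    exists E, I E /\ subset D (dom (phi (restrict x E))).

(** * phi^*(x) = lim_{D ∈ I} phi(x|D) *)
Definition is_limit {K V : Type} (I : (K -> Prop) -> Prop)
    (phi : pfun K V -> pfun K V) (x z : K -> V) : Prop :=
  forall D, I D -> exists E, I E /\
    forall E', I E' -> subset E E' ->
      forall a, D a -> phi (restrict x E') a = Some (z a).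

Definition phistar {K V : Type} (I : (K -> Prop) -> Prop)
    (phi : pfun K V -> pfun K V) (x : K -> V) : K -> V :=
  epsilon (inhabits x) (is_limit I phi x).

From Stdlib Require Import ClassicalEpsilon ClassicalDescription Classical FunctionalExtensionality PropExtensionality.

(* By monotonicity, [phi (x|E)] and [phi (x|E')] never disagree where both are
   defined (compare both with [phi (x|E ∪ E')]), so [phi^*(x)] extends every
   [phi (x|E)].  Given [D ∈ I], continuity of [phi] yields [E ∈ I] with
   [D ⊆ dom (phi (x|E))]; every [y] in the basic neighbourhood [N (x|E)] then
   satisfies [phi (x|E) ⊆ phi (y|E')] for all [E' ⊇ E], hence [phi^*(y)] agrees
   with [phi^*(x)] on [D]. *)

Lemma tau_open_ext {K V : Type} (I : (K -> Prop) -> Prop) (U W : (K -> V) -> Prop) :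
  tau_open I U -> (forall x, U x <-> W x) -> tau_open I W.
Proof.
  intros HU HUW. replace W with U; [exact HU|].
  apply functional_extensionality; intro x; apply propositional_extensionality, HUW.
Qed.

Lemma tau_open_of_basic_nbhds {K V : Type} (I : (K -> Prop) -> Prop) (U : (K -> V) -> Prop) :
  (forall x, U x -> exists g, Fn I g /\ N g x /\ forall y, N g y -> U y) -> tau_open I U.
Proof.
  intros Hnbhd.
  set (F := fun W : (K -> V) -> Prop =>
              exists g, Fn I g /\ W = N g /\ forall y, N g y -> U y).
  apply (tau_open_ext I (fun x => exists W, F W /\ W x)).
  { apply open_union. intros W [g [Hg [-> _]]]. now apply open_basic. }
  intro x; split.
  - intros [W [[g [_ [-> HgU]]] Hx]]. auto.
  - intros Hx. destruct (Hnbhd x Hx) as [g [Hg [Hgx HgU]]].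
    exists (N g). split; [exists g; auto|exact Hgx].
Qed.

Lemma tau_continuous_of_basic {K V : Type} (I : (K -> Prop) -> Prop)
    (G : (K -> V) -> (K -> V)) :
  (forall f, Fn I f -> tau_open I (fun x => N f (G x))) -> tau_continuous I G.
Proof.
  intros Hbasic U HU. induction HU as [f Hf| |U W _ IHU _ IHW|F _ IHF].
  - now apply Hbasic.
  - apply open_full.
  - now apply open_inter.
  - apply (tau_open_ext I
      (fun x => exists W, (exists U, F U /\ W = (fun y => U (G y))) /\ W x)).
    + apply open_union. intros W [U [HFU ->]]. now apply IHF.
    + intro x; split.
      * intros [W [[U [HFU ->]] HUx]]. eauto.
      * intros [U [HFU HUx]]. exists (fun y => U (G y)). split; eauto.
Qed.

Lemma card_lt_bool (K : Type) : uncountable K -> card_lt bool K.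
Proof.
  intros Hunc. split.
  - destruct (classic (exists k0 k1 : K, k0 <> k1)) as [[k0 [k1 Hk]]|Hsub].
    + exists (fun b : bool => if b then k0 else k1).
      intros [] [] Heq; congruence.
    + exfalso; apply Hunc. exists (fun _ => 0). intros x y _.
      apply NNPP; intro Hxy; apply Hsub; eauto.
  - intros [f Hf]. apply Hunc. exists (fun k => if f k then 0 else 1).
    intros x y Heq. apply Hf. destruct (f x), (f y); congruence.
Qed.

Lemma ideal_union {K : Type} (lt : K -> K -> Prop) (I : (K -> Prop) -> Prop) :
  uncountable K -> kappa_complete_proper_ideal lt I ->
  forall A B, I A -> I B -> I (fun a => A a \/ B a).
Proof.
  intros Hunc [Hdown [Hcomplete _]] A B HA HB.
  assert (HAB := Hcomplete bool (fun b => if b then A else B) (card_lt_bool K Hunc)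
                   (fun b => if b as b0 return I (if b0 then A else B) then HA else HB)).
  apply (Hdown _ _ HAB). intros a [Ha|Ha]; [exists true|exists false]; exact Ha.
Qed.

Section Restriction.
Context {K V : Type}.

Lemma N_restrict_self (x : K -> V) (E : K -> Prop) : N (restrict x E) x.
Proof.
  intros a v. unfold restrict.
  destruct (excluded_middle_informative (E a)); [|discriminate].
  now intros [= <-].
Qed.

Lemma N_restrict_agree (x y : K -> V) (E : K -> Prop) :
  N (restrict x E) y -> forall a, E a -> x a = y a.
Proof.
  intros Hy a Ha. symmetry. apply Hy. unfold restrict.
  now destruct (excluded_middle_informative (E a)).
Qed.

Lemma restrict_psub (x y : K -> V) (E E' : K -> Prop) :
  subset E E' -> (forall a, E a -> x a = y a) -> psub (restrict x E) (restrict y E').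
Proof.
  intros HEE' Hxy a v. unfold restrict.
  destruct (excluded_middle_informative (E a)) as [Ha|]; [|discriminate].
  destruct (excluded_middle_informative (E' a)) as [|HnE']; [|exfalso; auto].
  intros [= <-]. now rewrite Hxy.
Qed.

Lemma restrict_Fn (I : (K -> Prop) -> Prop) (x : K -> V) (E : K -> Prop) :
  (forall A B, I B -> subset A B -> I A) -> I E -> Fn I (restrict x E).
Proof.
  intros Hdown HE. apply (Hdown _ E HE). intros a Ha. unfold dom, restrict in Ha.
  now destruct (excluded_middle_informative (E a)).
Qed.

End Restriction.

Section Phistar.
Variables (K V : Type) (I : (K -> Prop) -> Prop) (phi : pfun K V -> pfun K V).
Hypothesis I_down : forall A B, I B -> subset A B -> I A.
Hypothesis I_union : forall A B, I A -> I B -> I (fun a => A a \/ B a).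
Hypothesis phi_mon : monotone I phi.
Hypothesis phi_cont : forall (x : K -> V) (D : K -> Prop), I D ->
    exists E, I E /\ subset D (dom (phi (restrict x E))).

Lemma phi_restrict_extend (x y : K -> V) (E E' : K -> Prop) a v :
  I E -> I E' -> subset E E' -> (forall b, E b -> x b = y b) ->
  phi (restrict x E) a = Some v -> phi (restrict y E') a = Some v.
Proof.
  intros HE HE' HEE' Hxy.
  apply phi_mon; [now apply restrict_Fn|now apply restrict_Fn|].
  now apply restrict_psub.
Qed.

Lemma phi_restrict_coherent (x : K -> V) (E1 E2 : K -> Prop) a v1 v2 :
  I E1 -> I E2 ->
  phi (restrict x E1) a = Some v1 -> phi (restrict x E2) a = Some v2 -> v1 = v2.
Proof.
  intros HE1 HE2 Hv1 Hv2.
  assert (HU := I_union _ _ HE1 HE2).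
  apply (phi_restrict_extend x x E1 _ a v1 HE1 HU (fun b Hb => or_introl Hb)
           (fun _ _ => eq_refl)) in Hv1.
  apply (phi_restrict_extend x x E2 _ a v2 HE2 HU (fun b Hb => or_intror Hb)
           (fun _ _ => eq_refl)) in Hv2.
  congruence.
Qed.

Lemma is_limit_exists (x : K -> V) : exists z, is_limit I phi x z.
Proof.
  set (value := fun a v =>
         forall E w, I E -> phi (restrict x E) a = Some w -> w = v).
  assert (Hvalue : forall a, exists v, value a v).
  { intro a. destruct (classic (exists E w, I E /\ phi (restrict x E) a = Some w))
      as [[E [w [HE Hw]]]|Hundef].
    - exists w. intros E' w' HE' Hw'. exact (phi_restrict_coherent x E' E a w' w HE' HE Hw' Hw).
    - exists (x a). intros E w HE Hw. exfalso; eauto. }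
  exists (fun a => epsilon (inhabits (x a)) (value a)).
  intros D HD. destruct (phi_cont x D HD) as [E [HE HDE]].
  exists E; split; [exact HE|].
  intros E' HE' HEE' a Ha.
  specialize (HDE a Ha). unfold dom in HDE.
  destruct (phi (restrict x E) a) as [w|] eqn:Hw; [|congruence].
  rewrite (phi_restrict_extend x x E E' a w HE HE' HEE' (fun _ _ => eq_refl) Hw).
  f_equal. exact (epsilon_spec _ _ (Hvalue a) E w HE Hw).
Qed.

Lemma phistar_is_limit (x : K -> V) : is_limit I phi x (phistar I phi x).
Proof. unfold phistar. apply epsilon_spec, is_limit_exists. Qed.

Lemma phistar_locally_determined (x : K -> V) (D : K -> Prop) :
  I D -> exists E, I E /\
    forall y, (forall b, E b -> x b = y b) ->
      forall a, D a -> phistar I phi y a = phistar I phi x a.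
Proof.
  intros HD. destruct (phistar_is_limit x D HD) as [E [HE Hx]].
  exists E; split; [exact HE|].
  intros y Hxy a Ha.
  destruct (phistar_is_limit y D HD) as [E2 [HE2 Hy]].
  assert (HU := I_union _ _ HE HE2).
  assert (Hya := Hy _ HU (fun b Hb => or_intror Hb) a Ha).
  assert (Hxa := phi_restrict_extend x y E _ a _ HE HU (fun b Hb => or_introl Hb) Hxy
                   (Hx E HE (fun b Hb => Hb) a Ha)).
  congruence.
Qed.

Lemma phistar_preimage_basic_open (f : pfun K V) :
  Fn I f -> tau_open I (fun x => N f (phistar I phi x)).
Proof.
  intros Hf. apply tau_open_of_basic_nbhds. intros x Hx.
  destruct (phistar_locally_determined x (dom f) Hf) as [E [HE Hloc]].
  exists (restrict x E). split; [now apply restrict_Fn|].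
  split; [apply N_restrict_self|].
  intros y Hy a v Hav.
  rewrite (Hloc y (N_restrict_agree x y E Hy) a) by congruence.
  exact (Hx a v Hav).
Qed.

End Phistar.

Theorem proposition3p2 (K : Type) (lt : K -> K -> Prop)
    (I : (K -> Prop) -> Prop) (V : Type) (phi : pfun K V -> pfun K V) :
  uncountable_regular_cardinal lt ->
  kappa_complete_proper_ideal lt I ->
  contains_bounded lt I ->
  (V = bool \/ V = K) ->
  maps_Fn I phi ->
  phi_continuous I phi ->
  tau_continuous I (phistar I phi).
Proof.
  intros [_ [Hunc _]] Hideal _ _ _ [Hmon Hcont].
  assert (Hdown : forall A B, I B -> subset A B -> I A) by apply Hideal.
  apply tau_continuous_of_basic. intros f Hf.
  apply phistar_preimage_basic_open;
    [exact Hdown|exact (ideal_union lt I Hunc Hideal)|exact Hmon|exact Hcont|exact Hf].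
Qed.
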